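(* Let $\pi:(X,T)\to(Y,T)$ be an extension (factor map) of minimal systems and $d\in\mathbb{N}$. (1) If $Y$ is a $d$-step topological characteristic factor of $X$ and $\pi$ is open, then $(\pi^{(d+1)})^{-1}(N_{d+1}(Y))=N_{d+1}(X)$. (2) If $N_{d+1}(X)$ is $\pi^{(d+1)}$-saturated, i.e. $(\pi^{(d+1)})^{-1}(\pi^{(d+1)}(N_{d+1}(X)))=N_{d+1}(X)$, then $Y$ is a $d$-step topological characteristic factor of $X$.
   Context: $\pi^{(m)}=\pi\times\cdots\times\pi$ ($m$ times). $N_m(X)=\overline{\{(T^{p+q}x,\dots,T^{p+mq}x):x\in X,p,q\in\mathbb{Z}\}}$. $Y$ is a $d$-step topological characteristic factor of $X$ (via $\pi$) if there is a dense $G_\delta$ subset $\Omega\subset X$ such that for every $x\in\Omega$ the set $L_x=\overline{\{(T^nx,T^{2n}x,\dots,T^{dn}x):n\in\mathbb{Z}\}}\subset X^d$ satisfies $(\pi^{(d)})^{-1}(\pi^{(d)}(L_x))=L_x$. *)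

From HB Require Import structures.
From mathcomp Require Import all_boot all_order all_algebra.
From mathcomp Require Import all_classical all_reals all_analysis.
Set Implicit Arguments. Unset Strict Implicit. Unset Printing Implicit Defensive.
Import Order.TTheory GRing.Theory Num.Theory.
Local Open Scope classical_set_scope.
Local Open Scope ring_scope.

Definition iterz {X : Type} (T Ti : X -> X) (n : int) : X -> X :=
  match n with
  | Posz k => iter k T
  | Negz k => iter k.+1 Ti
  end.

Definition tds (X : topologicalType) (T Ti : X -> X) : Prop :=
  compact [set: X] /\ continuous T /\ continuous Ti /\
  cancel T Ti /\ cancel Ti T.

Definition minimal_sys (X : topologicalType) (T : X -> X) : Prop :=
  [set: X] !=set0 /\
  forall A : set X, closed A -> T @` A `<=` A -> A = set0 \/ A = setT.

Definition factor_map (X Y : topologicalType) (TX : X -> X) (TY : Y -> Y)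
  (pi : X -> Y) : Prop :=
  continuous pi /\ (forall y, exists x, pi x = y) /\
  (forall x, pi (TX x) = TY (pi x)).

Definition open_map (X Y : topologicalType) (pi : X -> Y) : Prop :=
  forall U : set X, open U -> open (pi @` U).

Definition G_delta (X : topologicalType) (S : set X) : Prop :=
  exists U : nat -> set X, (forall n, open (U n)) /\ S = \bigcap_n U n.

Definition pi_pow (X Y : Type) (m : nat) (pi : X -> Y)
  : ('I_m -> X) -> ('I_m -> Y) := fun f => pi \o f.

(* N_m(X) = closure {(T^{p+q}x, ..., T^{p+mq}x)} ; coordinate i : 'I_m
   is T^{p+(i+1)q} x *)
Definition Nset (X : topologicalType) (T Ti : X -> X) (m : nat)
  : set {ptws 'I_m -> X} :=
  closure [set f : {ptws _ -> X} | exists (x : X) (p q : int),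
     f = (fun i : 'I_m => iterz T Ti (p + (i.+1)%:Z * q) x)].

Definition Lset (X : topologicalType) (T Ti : X -> X) (d : nat) (x : X)
  : set {ptws 'I_d -> X} :=
  closure [set f : {ptws _ -> X} | exists n : int,
     f = (fun i : 'I_d => iterz T Ti ((i.+1)%:Z * n) x)].

Arguments Nset {X} T Ti m.
Arguments Lset {X} T Ti d x.

Definition saturated (X Y : Type) (m : nat) (pi : X -> Y)
  (A : set ('I_m -> X)) : Prop :=
  (pi_pow pi) @^-1` ((pi_pow pi) @` A) = A.

Definition top_char_factor (X Y : topologicalType) (TX TiX : X -> X)
  (pi : X -> Y) (d : nat) : Prop :=
  exists Omega : set X, G_delta Omega /\ dense Omega /\
    forall x, Omega x -> saturated pi (Lset TX TiX d x).

From HB Require Import structures.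
From mathcomp Require Import all_boot all_order all_algebra.
From mathcomp Require Import all_classical all_reals all_analysis.
Import Order.TTheory GRing.Theory Num.Theory.
Local Open Scope classical_set_scope.
Local Open Scope ring_scope.

(** N_m(X) is the closure of the m-term progressions (T^q y, ..., T^(mq) y),
    and (x, L_x) lies in N_(d+1)(X) since (x, T^n x, ..., T^(dn) x) is such a
    progression starting at T^-n x.

    (1) Let pi^(d+1) f be in N_(d+1)(Y) and P_0 x ... x P_d an open box around f.
    As pi is open, some progression of Y passes through the open sets pi(P_i),
    so for some q the open set of x in P_0 with T^(jq)(pi x) in pi(P_j) for all
    j >= 1 is nonempty, and it contains a point x of the dense set Omega.  The
    fibre of pi^(d) over (T^q pi x, ..., T^(dq) pi x) meets P_1 x ... x P_d, so
    by saturation L_x does, and some (x, T^n x, ..., T^(dn) x) lies in the box.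

    (2) For V open in X^d, the x whose progression (T^n x, ..., T^(dn) x) enters
    V form an open set O_V whose closure contains the set F_V of x with (x, z)
    in N_(d+1)(X) for some z in V; so removing (closure F_V) \ O_V leaves an
    open dense set.  Intersecting over a countable basis of X^d, the Baire
    theorem gives a residual Omega on which (x, z) in N_(d+1)(X) forces z in
    L_x; saturation of N_(d+1)(X) then transfers to every L_x, x in Omega. *)

Section Iterz.
Context {A : Type} {T Ti : A -> A}.
Hypotheses (TK : cancel T Ti) (TiK : cancel Ti T).

Lemma iterzS z x : iterz T Ti (z + 1) x = T (iterz T Ti z x).
Proof.
case: z => [k|[|k]]; first by rewrite /= addn1.
  by rewrite /= TiK.
have -> : Negz k.+1 + 1 = Negz k by rewrite !NegzE -addn1 PoszD opprD addrK.
by rewrite /= TiK.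
Qed.

Lemma iterzN1 z x : iterz T Ti (z - 1) x = Ti (iterz T Ti z x).
Proof. by rewrite -[in RHS](subrK 1 z) iterzS TK. Qed.

Lemma iterzD a b x : iterz T Ti (a + b) x = iterz T Ti a (iterz T Ti b x).
Proof.
case: a => k; elim: k => [|k IH].
- by rewrite add0r.
- have -> : Posz k.+1 = Posz k + 1 by rewrite -addn1 PoszD.
  by rewrite addrAC iterzS IH -iterzS.
- by rewrite addrC iterzN1.
- have -> : Negz k.+1 = Negz k - 1 by rewrite !NegzE -addn1 PoszD opprD.
  by rewrite addrAC iterzN1 IH -iterzN1.
Qed.

Lemma iterzNK q x : iterz T Ti q (iterz T Ti (- q) x) = x.
Proof. by rewrite -iterzD subrr. Qed.

End Iterz.

Lemma continuous_iter {X : topologicalType} (f : X -> X) k :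
  continuous f -> continuous (iter k f).
Proof.
move=> fc; elim: k => [|k IH] x /=; first exact: cvg_id.
exact: continuous_comp (IH x) (fc _).
Qed.

Lemma continuous_iterz {X : topologicalType} (T Ti : X -> X) n :
  continuous T -> continuous Ti -> continuous (iterz T Ti n).
Proof. by move=> Tc Tic; case: n => k; apply: continuous_iter. Qed.

Definition progression {A : Type} (T Ti : A -> A) (m : nat) (q : int) (x : A)
  : 'I_m -> A := fun i => iterz T Ti (i.+1%:Z * q) x.

Definition ocons {A : Type} {d : nat} (x : A) (w : 'I_d -> A) : 'I_d.+1 -> A :=
  fun i => if unlift ord0 i is Some j then w j else x.

Definition otail {A : Type} {d : nat} (f : 'I_d.+1 -> A) : 'I_d -> A :=
  fun j => f (lift ord0 j).

Section Ocons.
Context {A : Type} {d : nat}.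

Lemma ocons0 (x : A) (w : 'I_d -> A) : ocons x w ord0 = x.
Proof. by rewrite /ocons unlift_none. Qed.

Lemma oconsS (x : A) (w : 'I_d -> A) j : ocons x w (lift ord0 j) = w j.
Proof. by rewrite /ocons liftK. Qed.

Lemma otail_ocons (x : A) (w : 'I_d -> A) : otail (ocons x w) = w.
Proof. by apply/funext => j; rewrite /otail oconsS. Qed.

Lemma pi_pow_ocons {B : Type} (pi : A -> B) x (w : 'I_d -> A) :
  pi_pow pi (ocons x w) = ocons (pi x) (pi_pow pi w).
Proof. by apply/funext => i; rewrite /pi_pow /ocons /=; case: unlift. Qed.

End Ocons.

Section Progression.
Context {A : Type} {T Ti : A -> A}.
Hypotheses (TK : cancel T Ti) (TiK : cancel Ti T).

Lemma progressionE m p q x :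
  (fun i : 'I_m => iterz T Ti (p + i.+1%:Z * q) x) =
  progression T Ti m q (iterz T Ti p x).
Proof. by apply/funext => i; rewrite /progression -iterzD // addrC. Qed.

Lemma progression_cons d q x :
  progression T Ti d.+1 q x =
  ocons (iterz T Ti q x) (progression T Ti d q (iterz T Ti q x)).
Proof.
apply/funext => i; case: (unliftP ord0 i) => [j ->|->].
  rewrite oconsS /progression -iterzD // lift0.
  by rewrite -[j.+2]addn1 PoszD mulrDl mul1r.
by rewrite ocons0 /progression mul1r.
Qed.

End Progression.

Section Equivariance.
Context {A B : Type} {TA TiA : A -> A} {TB TiB : B -> B} (pi : A -> B).
Hypotheses (TiAK : cancel TiA TA) (TBK : cancel TB TiB).
Hypothesis piT : forall x, pi (TA x) = TB (pi x).

Lemma pi_iterz n x : pi (iterz TA TiA n x) = iterz TB TiB n (pi x).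
Proof.
have piTi y : pi (TiA y) = TiB (pi y) by rewrite -{2}(TiAK y) piT TBK.
have iter_pi f g k y : (forall y, pi (f y) = g (pi y)) ->
    pi (iter k f y) = iter k g (pi y).
  by move=> fg; elim: k => //= k IH; rewrite fg IH.
by case: n => k; apply: iter_pi.
Qed.

Lemma pi_pow_progression m q x :
  pi_pow pi (progression TA TiA m q x) = progression TB TiB m q (pi x).
Proof. by apply/funext => i; rewrite /pi_pow /= pi_iterz. Qed.

End Equivariance.

Section FinitePower.
Context {X : topologicalType} {m : nat}.

Definition box (P : 'I_m -> set X) : set {ptws 'I_m -> X} :=
  [set f | forall i, P i (f i)].

Lemma box_nbhs (f : {ptws 'I_m -> X}) P :
  (forall i, nbhs (f i) (P i)) -> nbhs f (box P).
Proof.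
move=> fP; apply: (@filter_forall _ _ (fun i (g : {ptws 'I_m -> X}) => P i (g i))
  _ (nbhs_filter f)) => i.
exact: (@proj_continuous 'I_m (fun=> X) i f (P i) (fP i)).
Qed.

Lemma open_box P : (forall i, open (P i)) -> open (box P).
Proof.
move=> oP; rewrite openE => f Pf; apply: box_nbhs => i.
exact: open_nbhs_nbhs.
Qed.

Lemma nbhs_box (f : {ptws 'I_m -> X}) B :
  nbhs f B -> exists2 P, (forall i, open_nbhs (f i) (P i)) & box P `<=` B.
Proof.
pose F := filter_from [set P | forall i, nbhs (f i) (P i)] box.
have FF : Filter F.
  apply: filter_from_filter; first by exists (fun=> setT) => i; exact: filterT.
  move=> P Q fP fQ; exists (fun i => P i `&` Q i) => [i|g PQg].
    exact: filterI.
  by split=> i; have [] := PQg i.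
suff /(_ B) Ff : F --> f.
  move=> /Ff[P fP PB]; exists (fun i => (P i)°) => [i|g Pg].
    by split; [exact: open_interior | exact: fP].
  by apply: PB => i; exact: interior_subset.
apply/cvg_sup => i; apply/cvg_image.
  by apply/seteqP; split => // y _; exists (fun=> y).
move=> A fA; pose P j := if j == i then A else setT.
exists (box P).
  by exists P => // j; rewrite /P; case: eqP => [->|_] //; exact: filterT.
apply/seteqP; split => [_ [g Pg <-]|y Ay]; first by have := Pg i; rewrite /P eqxx.
by exists (fun=> y) => // j; rewrite /P; case: eqP.
Qed.

Lemma continuous_ptws {S : topologicalType} (phi : 'I_m -> S -> X) :
  (forall i, continuous (phi i)) ->
  continuous (fun s => (fun i => phi i s) : {ptws 'I_m -> X}).
Proof.
move=> phic s B /nbhs_box[P Pphi PB].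
have : \forall t \near s, forall i, P i (phi i t).
  apply: filter_forall => i; apply: (phic i); exact: open_nbhs_nbhs.
by apply: filterS => t Pt; exact: PB.
Qed.

End FinitePower.

Lemma continuous_ocons {X : topologicalType} {d : nat} (x : X) :
  continuous (ocons x : {ptws 'I_d -> X} -> {ptws 'I_d.+1 -> X}).
Proof.
apply: (continuous_ptws (fun i (w : {ptws 'I_d -> X}) => ocons x w i)) => i.
rewrite /ocons; case: unlift => [j|]; [exact: proj_continuous | exact: cst_continuous].
Qed.

Lemma continuous_otail {X : topologicalType} {d : nat} :
  continuous (otail : {ptws 'I_d.+1 -> X} -> {ptws 'I_d -> X}).
Proof.
apply: (continuous_ptws (fun j (f : {ptws 'I_d.+1 -> X}) => f (lift ord0 j))).
by move=> j; exact: proj_continuous.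
Qed.

Lemma continuous_pi_pow {X Y : topologicalType} (pi : X -> Y) m :
  continuous pi -> continuous (pi_pow pi : {ptws 'I_m -> X} -> {ptws 'I_m -> Y}).
Proof.
move=> pic; apply: (continuous_ptws (fun i (f : {ptws 'I_m -> X}) => pi (f i))).
by move=> i f; apply: continuous_comp; [exact: proj_continuous | exact: pic].
Qed.

Lemma continuous_progression {X : topologicalType} (T Ti : X -> X) m q :
  continuous T -> continuous Ti ->
  continuous (progression T Ti m q : X -> {ptws 'I_m -> X}).
Proof.
move=> Tc Tic; apply: (continuous_ptws (fun i => iterz T Ti (i.+1%:Z * q))).
by move=> i; exact: continuous_iterz.
Qed.

Lemma continuous_image_closure {S U : topologicalType} (h : S -> U) (A : set S) :
  continuous h -> h @` closure A `<=` closure (h @` A).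
Proof.
move=> hc _ [w clw <-] B hB.
have [a [Aa Ba]] := clw (h @^-1` B) (hc w B hB).
by exists (h a); split => //; exists a.
Qed.

Lemma dense_closureC_setU {T : topologicalType} (F O : set T) :
  F `<=` closure O -> dense (~` closure F `|` O).
Proof.
move=> FO W [w Ww] oW.
have [[v [Wv Ov]]|WO] := pselect (W `&` O !=set0).
  by exists v; split => //; right.
exists w; split => //; left => clw.
have [y [Fy Wy]] := clw W (open_nbhs_nbhs (conj oW Ww)).
have [v [Ov Wv]] := FO y Fy W (open_nbhs_nbhs (conj oW Wy)).
by apply: WO; exists v.
Qed.

Section CompactRegularBaire.
Context {T : topologicalType}.
Hypothesis cT : compact [set: T].

Lemma compact_bigcap_closure (O : nat -> set T) :
  (forall n, O n !=set0) -> (forall n, O n.+1 `<=` O n) ->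
  \bigcap_n closure (O n) !=set0.
Proof.
move=> O0 Odec.
have Omon n k : (n <= k)%N -> O k `<=` O n.
  by move=> /subnK <-; elim: (k - n)%N => [|j IH] //= x /Odec /IH.
pose G := filter_from [set: nat] O.
have PG : ProperFilter G.
  apply: filter_from_proper => [|n _]; last exact: O0.
  apply: filter_from_filter; first by exists 0%N.
  move=> i j _ _; exists (maxn i j) => // x Ox.
  by split; apply: Omon x Ox; rewrite ?leq_maxl ?leq_maxr.
have [p [_ clp]] := cT G PG filterT.
by exists p => n _ B /(clp (O n)); apply; exists n.
Qed.

Hypothesis regT : regular_space T.

Lemma regular_shrink_open_dense (O U : set T) :
  open O -> O !=set0 -> open U -> dense U ->
  exists2 V, open V /\ V !=set0 & closure V `<=` O `&` U.
Proof.
move=> oO O0 oU dU; have [b [Ob Ub]] := dU O O0 oO.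
have /regT[C bC CU] : nbhs b (O `&` U).
  by apply: open_nbhs_nbhs; split => //; exact: openI.
exists C°; first by split; [exact: open_interior | exists b].
by apply: subset_trans CU; apply: closureS; exact: interior_subset.
Qed.

Lemma compact_regular_Baire (U : nat -> set T) :
  (forall n, open (U n) /\ dense (U n)) -> dense (\bigcap_n U n).
Proof.
move=> oU D D0 oD.
have /boolp.choice[shrink shrinkP] : forall p : nat * set T, exists V,
    open p.2 /\ p.2 !=set0 -> [/\ open V, V !=set0 & closure V `<=` p.2 `&` U p.1].
  move=> [n O] /=; have [[oO O0]|nO] := pselect (open O /\ O !=set0).
    have [V [oV V0] VOU] := regular_shrink_open_dense _ _ oO O0 (oU n).1 (oU n).2.
    by exists V.
  by exists set0.
pose fix O n := if n is k.+1 then shrink (k, O k) else D.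
have HO n : open (O n) /\ O n !=set0.
  by elim: n => [|n [oO O0]] //=; have [] := shrinkP (n, O n) (conj oO O0).
have OU n : closure (O n.+1) `<=` O n `&` U n by have [] := shrinkP (n, O n) (HO n).
have [p Op] : \bigcap_n closure (O n) !=set0.
  apply: compact_bigcap_closure => [n|n x On1]; first exact: (HO n).2.
  by have [] := OU n x (subset_closure On1).
exists p; split; first by have [] := OU 0%N p (Op 1%N I).
by move=> n _; have [] := OU n p (Op n.+1 I).
Qed.

End CompactRegularBaire.

Definition indexed_basis {T : topologicalType} {I : Type} (B : I -> set T) :=
  (forall i, open (B i)) /\ forall x A, nbhs x A -> exists2 i, B i x & B i `<=` A.

Lemma compact_pseudometric_nat_basis {R : realType} {X : pseudoMetricType R} :
  compact [set: X] -> [set: X] !=set0 -> exists B : nat -> set X, indexed_basis B.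
Proof.
move=> cX [x0 _].
pose XP : pseudoPMetricType R := HB.pack X (isPointed.Build X x0).
have [B cB [oB bB]] := @compact_second_countable R XP cX.
have [B0|[f]] := pfcard_geP cB.
  by have [U []] := bB x0 setT filterT; rewrite B0.
exists f; split => [n|x A xA]; first exact/oB/funS.
have [U [/(@surj _ _ _ _ f)[n _ <-] Ux] UA] := bB x A xA.
by exists n.
Qed.

Lemma box_basis {T : topologicalType} {I : Type} (B : I -> set T) m :
  indexed_basis B -> indexed_basis (fun g : {ffun 'I_m -> I} => box (B \o g)).
Proof.
move=> [oB bB]; split => [g|f A /nbhs_box[P fP PA]].
  by apply: open_box => i; exact: oB.
have /boolp.choice[g gP] : forall i, exists n, B n (f i) /\ B n `<=` P i.
  by move=> i; have [n] := bB (f i) (P i) (open_nbhs_nbhs (fP i)); exists n.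
exists [ffun i => g i] => [i|h gh]; first by rewrite /= ffunE; exact: (gP i).1.
by apply: PA => i; apply: (gP i).2; have := gh i; rewrite /= ffunE.
Qed.

Section ProgressionClosures.
Context {X : topologicalType} (T Ti : X -> X).
Hypotheses (Tc : continuous T) (Tic : continuous Ti).
Hypotheses (TK : cancel T Ti) (TiK : cancel Ti T).

Definition progressions m : set {ptws 'I_m -> X} :=
  [set f | exists q y, f = progression T Ti m q y].

Lemma NsetE m : Nset T Ti m = closure (progressions m).
Proof.
congr closure; apply/seteqP; split => f.
  by move=> [y [p [q ->]]]; exists q, (iterz T Ti p y); rewrite progressionE.
by move=> [q [y ->]]; exists y, 0, q; rewrite progressionE.
Qed.

Lemma LsetE d x :
  Lset T Ti d x = closure (range (progression T Ti d ^~ x) : set {ptws 'I_d -> X}).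
Proof.
by congr closure; apply/seteqP; split => f [n]; [move=> ->|move=> _ <-]; exists n.
Qed.

Lemma Lset_ocons d x w : Lset T Ti d x w -> Nset T Ti d.+1 (ocons x w).
Proof.
move=> Lw; rewrite NsetE.
have gen : (ocons x : {ptws 'I_d -> X} -> {ptws 'I_d.+1 -> X}) @`
    range (progression T Ti d ^~ x) `<=` progressions d.+1.
  move=> _ [_ [n _ <-] <-]; exists n, (iterz T Ti (- n) x).
  by rewrite progression_cons // iterzNK.
apply: (closureS gen); apply: continuous_image_closure (continuous_ocons x) _ _.
by exists w; rewrite -?LsetE.
Qed.

Variable d : nat.

Definition enters (V : set {ptws 'I_d -> X}) : set X :=
  \bigcup_n progression T Ti d n @^-1` V.

Definition Nset_head (V : set {ptws 'I_d -> X}) : set X :=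
  [set x | exists2 z, V z & Nset T Ti d.+1 (ocons x z)].

Definition Nset_good (V : set {ptws 'I_d -> X}) : set X :=
  ~` closure (Nset_head V) `|` enters V.

Lemma open_enters V : open V -> open (enters V).
Proof.
move=> oV; apply: bigcup_open => n _.
apply: (@open_comp _ {ptws 'I_d -> X}) => // x _.
exact: continuous_progression.
Qed.

Lemma Nset_head_sub_closure V : open V -> Nset_head V `<=` closure (enters V).
Proof.
move=> oV x [z Vz]; rewrite NsetE => Nxz B xB.
pose Q := [set f : {ptws 'I_d.+1 -> X} | B (f ord0)] `&` otail @^-1` V.
have nQ : nbhs (ocons x z : {ptws 'I_d.+1 -> X}) Q.
  apply: filterI.
    have xB0 : nbhs (ocons x z ord0) B by rewrite ocons0.
    exact: (@proj_continuous 'I_d.+1 (fun=> X) ord0 (ocons x z) B xB0).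
  by apply: continuous_otail; rewrite otail_ocons; exact: open_nbhs_nbhs.
have [_ [[q [y ->]]]] := Nxz Q nQ.
rewrite /Q /preimage /= progression_cons // ocons0 otail_ocons => -[By Vy].
by exists (iterz T Ti q y); split => //; exists q.
Qed.

Lemma open_Nset_good V : open V -> open (Nset_good V).
Proof.
by move=> oV; apply: openU; [exact/closed_openC/closed_closure | exact: open_enters].
Qed.

Lemma dense_Nset_good V : open V -> dense (Nset_good V).
Proof. by move=> oV; apply/dense_closureC_setU/Nset_head_sub_closure. Qed.

Lemma Nset_ocons_Lset {I : Type} (V : I -> set {ptws 'I_d -> X}) x z :
  indexed_basis V -> (forall i, Nset_good (V i) x) ->
  Nset T Ti d.+1 (ocons x z) -> Lset T Ti d x z.
Proof.
move=> [_ bV] xgood Nxz; rewrite LsetE => B zB.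
have [i Vz VB] := bV z B zB.
have [Nx|[n _ Vn]] := xgood i.
  by exfalso; apply: Nx; apply: subset_closure; exists z.
by exists (progression T Ti d n x); split; [exists n | exact: VB].
Qed.

Lemma saturated_Nset_top_char_factor {Y : topologicalType} (pi : X -> Y)
    (B : nat -> set X) :
  compact [set: X] -> regular_space X -> indexed_basis B ->
  saturated pi (Nset T Ti d.+1) -> top_char_factor T Ti pi d.
Proof.
move=> cX regX Bbasis sat.
pose V (g : {ffun 'I_d -> nat}) := box (B \o g).
have Vbasis : indexed_basis V := box_basis B d Bbasis.
pose U n := if unpickle n is Some g then Nset_good (V g) else setT.
have oU n : open (U n) /\ dense (U n).
  rewrite /U; case: unpickle => [g|].
    by split; [apply: open_Nset_good | apply: dense_Nset_good]; exact: Vbasis.1.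
  by split; [exact: openT | move=> W [w Ww] _; exists w].
exists (\bigcap_n U n); split; first by exists U; split => // n; exact: (oU n).1.
split; first exact: compact_regular_Baire.
move=> x Ux; apply/seteqP; split => [z [w Lw piwz]|z Lz]; last by exists z.
apply: (Nset_ocons_Lset V x z Vbasis) => [g|].
  by have := Ux (pickle g) I; rewrite /U pickleK.
by rewrite -sat; exists (ocons x w); [exact: Lset_ocons | rewrite !pi_pow_ocons piwz].
Qed.

End ProgressionClosures.

Section OpenFactor.
Context {X Y : topologicalType} (TX TiX : X -> X) (TY TiY : Y -> Y) (pi : X -> Y).
Hypotheses (TXK : cancel TX TiX) (TiXK : cancel TiX TX).
Hypotheses (TYK : cancel TY TiY) (TiYK : cancel TiY TY).
Hypotheses (TYc : continuous TY) (TiYc : continuous TiY) (pic : continuous pi).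
Hypothesis piT : forall x, pi (TX x) = TY (pi x).

Lemma pi_pow_Nset m : pi_pow pi @` Nset TX TiX m `<=` Nset TY TiY m.
Proof.
move=> _ [f + <-]; rewrite !NsetE // => Nf.
have : closure ((pi_pow pi : {ptws 'I_m -> X} -> {ptws 'I_m -> Y}) @`
    progressions TX TiX m) (pi_pow pi f).
  by apply: continuous_image_closure (continuous_pi_pow pi m pic) _ _; exists f.
apply: closureS => _ [_ [q [y ->]] <-]; exists q, (pi y).
exact: pi_pow_progression.
Qed.

Variable d : nat.

Definition fiber_window (P : 'I_d.+1 -> set X) (q : int) : set X :=
  P ord0 `&` (progression TY TiY d q \o pi) @^-1` box (fun j => pi @` P (lift ord0 j)).

Lemma open_fiber_window P q :
  open_map pi -> (forall i, open (P i)) -> open (fiber_window P q).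
Proof.
move=> opi oP; apply: openI; first exact: oP.
apply: (@open_comp _ {ptws 'I_d -> Y}) => [x _|].
  by apply: continuous_comp; [exact: pic | exact: continuous_progression].
by apply: open_box => j; exact/opi/oP.
Qed.

Lemma Nset_fiber_window (f : {ptws 'I_d.+1 -> X}) P :
  open_map pi -> (forall i, open_nbhs (f i) (P i)) ->
  Nset TY TiY d.+1 (pi_pow pi f) -> exists q, fiber_window P q !=set0.
Proof.
move=> opi fP; rewrite NsetE // => /(_ (box (fun i => pi @` P i))) [].
  apply: box_nbhs => i; apply: open_nbhs_nbhs; split; first exact/opi/(fP i).1.
  by exists (f i) => //; exact: (fP i).2.
move=> _ [[q [y ->]]]; rewrite progression_cons // => Py.
have := Py ord0; rewrite ocons0 => -[x Px pix].
exists q, x; split => // j; rewrite /= pix.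
by have := Py (lift ord0 j); rewrite oconsS.
Qed.

Lemma saturated_window_progression (P : 'I_d.+1 -> set X) q x :
  saturated pi (Lset TX TiX d x) -> (forall i, open (P i)) -> fiber_window P q x ->
  exists n, box P (progression TX TiX d.+1 n (iterz TX TiX (- n) x)).
Proof.
move=> satx oP [Px Hx].
have /boolp.choice[w wP] : forall j, exists w,
    P (lift ord0 j) w /\ pi w = iterz TY TiY (j.+1%:Z * q) (pi x).
  by move=> j; have [w] := Hx j; exists w.
have : Lset TX TiX d x w.
  rewrite -satx; exists (progression TX TiX d q x).
    by rewrite LsetE; apply: subset_closure; exists q.
  rewrite (pi_pow_progression pi TiXK TYK piT).
  by apply/funext => j; rewrite /pi_pow /= (wP j).2.
rewrite LsetE => /(_ (box (P \o lift ord0))) [].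
  by apply: box_nbhs => j; apply: open_nbhs_nbhs; split; [exact: oP | exact: (wP j).1].
move=> _ [[n _ <-] Pn]; exists n; rewrite progression_cons // iterzNK // => i.
by case: (unliftP ord0 i) => [j ->|->]; rewrite ?ocons0 ?oconsS //; exact: Pn.
Qed.

Lemma open_top_char_factor_Nset : open_map pi -> top_char_factor TX TiX pi d ->
  pi_pow pi @^-1` Nset TY TiY d.+1 = Nset TX TiX d.+1.
Proof.
move=> opi [Om [_ [dOm satOm]]]; apply/seteqP; split => f Nf; last first.
  by apply: pi_pow_Nset; exists f.
rewrite NsetE // => B /nbhs_box[P fP PB].
have oP i : open (P i) := (fP i).1.
have [q W0] := Nset_fiber_window f P opi fP Nf.
have [x [Wx Omx]] := dOm _ W0 (open_fiber_window P q opi oP).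
have [n Pn] := saturated_window_progression P q x (satOm x Omx) oP Wx.
exists (progression TX TiX d.+1 n (iterz TX TiX (- n) x)).
by split; [exists n, (iterz TX TiX (- n) x) | exact: PB].
Qed.

End OpenFactor.

Theorem theorem4p5 (R : realType) (X Y : metricType R)
  (TX TiX : X -> X) (TY TiY : Y -> Y) (pi : X -> Y) (d : nat) :
  tds TX TiX -> tds TY TiY -> minimal_sys TX -> minimal_sys TY ->
  factor_map TX TY pi ->
  ((top_char_factor TX TiX pi d -> open_map pi ->
      (pi_pow pi) @^-1` (Nset TY TiY d.+1) = Nset TX TiX d.+1) /\
   (saturated pi (Nset TX TiX d.+1) -> top_char_factor TX TiX pi d)).
Proof.
move=> [cX [TXc [TiXc [TXK TiXK]]]] [_ [TYc [TiYc [TYK TiYK]]]] [X0 _] _ [pic [_ piT]].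
split => [tcf opi|sat].
  exact: open_top_char_factor_Nset.
have [B Bbasis] := compact_pseudometric_nat_basis cX X0.
exact: saturated_Nset_top_char_factor uniform_regular Bbasis sat.
Qed.
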